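(* Let $H$ be a graph with at least one edge, let $0<\delta\leq 1/4$, let $G$ be a $\delta$-dense graph, and let $A,B\subseteq V(G)$ be disjoint independent sets of $G$ such that $|A|\geq |B|\geq 1$, every vertex of $A$ is adjacent to every vertex of $V(G)\setminus A$, and every vertex of $B$ is adjacent to every vertex of $V(G)\setminus B$. Let $G_A$ be obtained from $G$ by deleting one vertex of $A$, and $G_B$ be obtained from $G$ by deleting one vertex of $B$. Then $$\mathrm{inj}(H,G_A)\geq \mathrm{inj}(H,G_B)+2e(H)\,(|A|-|B|)\bigl(1-3\delta\, v(H)^3\bigr)\, v(G)^{v(H)-2}.$$
   Context: $v(G)$ and $e(G)$ denote the numbers of vertices and edges of $G$. A graph $G$ is $\delta$-dense if $\deg(v)\geq (1-\delta)v(G)$ for every $v\in V(G)$. A map $\varphi:V(H)\to V(G)$ is a homomorphism from $H$ to $G$ if $\varphi(u)\varphi(v)\in E(G)$ for every $uv\in E(H)$; $\mathrm{inj}(H,G)$ denotes the number of injective homomorphisms from $H$ to $G$. *)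

From mathcomp Require Import all_boot all_order all_algebra.
Set Implicit Arguments. Unset Strict Implicit. Unset Printing Implicit Defensive.

Record sgraph := SGraph {
  vert :> finType;
  adj : rel vert;
  adj_sym : symmetric adj;
  adj_irr : irreflexive adj }.

Definition nv (G : sgraph) : nat := #|G|.

Definition edges (G : sgraph) : {set {set G}} :=
  [set S : {set G} | [exists x, exists y, (adj x y) && (S == [set x; y])]].
Definition ne (G : sgraph) : nat := #|edges G|.

Definition deg (G : sgraph) (v : G) : nat := #|[set u : G | adj v u]|.

Definition dense {R : realFieldType} (delta : R) (G : sgraph) : Prop :=
  forall v : G, ((1 - delta) * (nv G)%:R <= (deg v)%:R)%R.

Definition indep (G : sgraph) (A : {set G}) : Prop :=
  forall x y, x \in A -> y \in A -> ~~ adj x y.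

Definition inj (H G : sgraph) : nat :=
  #|[set f : {ffun H -> G} | injectiveb f &&
      [forall u, forall v, adj u v ==> adj (f u) (f v)]]|.

Section Del.
Variables (G : sgraph) (a : G).
Definition del_vert := {x : G | x != a}.
Definition del_adj : rel del_vert := fun x y => adj (val x) (val y).
Lemma del_adj_sym : symmetric del_adj.
Proof. by move=> x y; rewrite /del_adj adj_sym. Qed.
Lemma del_adj_irr : irreflexive del_adj.
Proof. by move=> x; rewrite /del_adj adj_irr. Qed.
Definition del_vertex : sgraph := SGraph del_adj_sym del_adj_irr.
End Del.

From mathcomp Require Import all_boot all_order all_algebra perm.
From mathcomp Require Import ring lra.
Import Order.TTheory GRing.Theory Num.Theory.

Set Implicit Arguments. Unset Strict Implicit. Unset Printing Implicit Defensive.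

(* Let [Aex] consist of [|A| - |B|] vertices of [A] other than [a].  The
   involution [pi] exchanging [A :\: Aex] with [B] (and [a] with [b]) is an
   automorphism of [G - Aex], so it matches the injective homomorphisms that
   avoid [a] and [Aex] with those that avoid [b] and [Aex].  Among the maps
   meeting [Aex], those avoiding both [a] and [b] are common to both sides, so
   inj(H, G_A) - inj(H, G_B) = |XA| - |XB|, where [XA] collects the maps that
   meet [Aex], use [b] and avoid [a].  Transposing [a] and [b] carries [XB]
   onto a set [Y], and the difference becomes |XA \ Y| - |Y \ XA|.
   For every arc [uz] of [H], the maps with [u |-> b], [z |-> Aex] and the
   other vertices sent to [C = V(G) \ (A u B)] are in [XA \ Y] as soon as they
   are injective homomorphisms, which by density fails only for a fraction
   [2 delta v(H)^2] of them; and [|C| >= (1 - 2 delta) v(G)] with Bernoulli's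
   inequality bounds [|C|^(v(H)-2)] from below.  A map of [Y \ XA] must send some edge of [H] onto [b] and a
   vertex of [B :\ b], which costs a factor [|B| <= delta v(G)]. *)

Section FiniteFamilies.
Variables (I T : finType).

Definition fam (F : I -> {set T}) : {set {ffun I -> T}} :=
  [set f : {ffun I -> T} | [forall i, f i \in F i]].

Lemma famP (F : I -> {set T}) (f : {ffun I -> T}) :
  reflect (forall i, f i \in F i) (f \in fam F).
Proof. by rewrite inE; apply: forallP. Qed.

Lemma card_fam (F : I -> {set T}) : #|fam F| = \prod_i #|F i|.
Proof.
have -> : #|fam F| = #|(family (fun i => mem (F i)) : simpl_pred {ffun I -> T})|.
  by apply: eq_card => f; apply/famP/familyP.
by rewrite card_family foldrE big_map big_enum.
Qed.

Definition upd (F : I -> {set T}) (w : I) (X : {set T}) : I -> {set T} :=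
  fun i => if i == w then X else F i.

Lemma upd_at (F : I -> {set T}) w X : upd F w X w = X.
Proof. by rewrite /upd eqxx. Qed.

Lemma upd_off (F : I -> {set T}) w X i : i != w -> upd F w X i = F i.
Proof. by rewrite /upd => /negbTE ->. Qed.

Lemma card_fam_upd (F : I -> {set T}) w X : #|fam (upd F w X)| * #|F w| = #|X| * #|fam F|.
Proof.
rewrite !card_fam (bigD1 w) //= [in RHS](bigD1 w) //= upd_at.
rewrite (eq_bigr (fun i => #|F i|)) => [|i /upd_off -> //].
by rewrite mulnAC mulnA.
Qed.

Definition postcomp (p : T -> T) (f : {ffun I -> T}) : {ffun I -> T} :=
  [ffun x => p (f x)].

Lemma postcompK (p : T -> T) : involutive p -> involutive (postcomp p).
Proof. by move=> pK f; apply/ffunP => x; rewrite !ffunE pK. Qed.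

Lemma injectiveb_postcomp (p : T -> T) (f : {ffun I -> T}) :
  involutive p -> injectiveb (postcomp p f) = injectiveb f.
Proof.
move=> pK; apply/injectiveP/injectiveP => fi x y.
  by move=> E; apply: fi; rewrite !ffunE E.
by rewrite !ffunE => /(congr1 p); rewrite !pK => /fi.
Qed.

Lemma card_le_sum_cover (J : finType) (P : pred J) (S : {set T}) (F : J -> {set T}) :
  (forall x, x \in S -> exists2 j, P j & x \in F j) ->
  #|S| <= \sum_(j | P j) #|F j|.
Proof.
move=> coverS; rewrite (eq_bigr (fun j => \sum_x (x \in F j))); last first.
  by move=> j _; rewrite -sum1_card big_mkcond.
rewrite exchange_big /= -sum1_card big_mkcond /=.
apply: (@leq_sum _ _ predT) => x _; case: ifP => // /coverS [j Pj xj].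
by rewrite (bigD1 j) //= xj.
Qed.

Lemma sum_card_le_disjoint (J : finType) (P : pred J) (S : {set T})
    (F : J -> {set T}) :
  (forall j x, P j -> x \in F j -> x \in S) ->
  (forall j j' x, P j -> P j' -> x \in F j -> x \in F j' -> j = j') ->
  \sum_(j | P j) #|F j| <= #|S|.
Proof.
move=> subS disjF; rewrite (eq_bigr (fun j => \sum_x (x \in F j))); last first.
  by move=> j _; rewrite -sum1_card big_mkcond.
rewrite exchange_big /= -sum1_card [leqRHS]big_mkcond /=.
apply: leq_sum => x _.
case: (pickP [pred j | P j && (x \in F j)]) => [j /andP [Pj xj] | none].
  rewrite (subS j x Pj xj) (bigD1 j) //= xj big1 // => j' /andP [Pj' nj'].
  by case xj': (x \in F j') => //; case/eqP: nj'; apply: (disjF _ _ x).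
by rewrite big1 // => j Pj; have := none j; rewrite /= Pj /= => ->.
Qed.

End FiniteFamilies.

Lemma eq_card_involution (U : finType) (q : U -> U) (S1 S2 : {set U}) :
  involutive q -> {in S1, forall x, q x \in S2} -> {in S2, forall x, q x \in S1} ->
  #|S1| = #|S2|.
Proof.
move=> qK q12 q21; have qinj := can_inj qK.
apply/eqP; rewrite eqn_leq -[X in (X <= _)%N](card_imset _ qinj).
rewrite -[X in (_ && (X <= _))%N](card_imset _ qinj).
by apply/andP; split; apply: subset_leq_card; apply/subsetP => _ /imsetP [x ? ->];
  [apply: q12 | apply: q21].
Qed.

Lemma adj_neq (H : sgraph) (x y : H) : adj x y -> x != y.
Proof. by apply: contraTneq => ->; rewrite adj_irr. Qed.

Definition arcs (H : sgraph) : {set H * H} := [set p : H * H | adj p.1 p.2].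

Lemma card_arcs (H : sgraph) : #|arcs H| = (2 * ne H)%N.
Proof.
pose ends (p : H * H) := [set p.1; p.2].
rewrite -sum1_card (partition_big ends (mem (edges H))); last first.
  by move=> [x y]; rewrite !inE /= => xy; apply/existsP; exists x; apply/existsP; exists y;
     rewrite xy eqxx.
rewrite /ne -sum1_card big_distrr /=; apply: eq_bigr => S.
rewrite inE => /existsP [x /existsP [y /andP [xy /eqP ->]]].
have -> : (2 * 1 = #|[set (x, y); (y, x)]|)%N.
  by rewrite cards2 xpair_eqE (negbTE (adj_neq xy)).
rewrite -sum1_card; apply: eq_bigl => [[u v]] /=; rewrite !inE /= !xpair_eqE.
apply/idP/idP.
  case/andP => uv /eqP E.
  have uS : u \in [set x; y] by rewrite -E !inE eqxx.
  have vS : v \in [set x; y] by rewrite -E !inE eqxx orbT.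
  move: uS vS (adj_neq uv); rewrite !inE => /orP [] /eqP -> /orP [] /eqP ->;
    by rewrite ?eqxx ?andbT ?orbT.
case/orP => /andP [/eqP -> /eqP ->]; rewrite ?xy //=.
by rewrite adj_sym xy /= setUC eqxx.
Qed.

Lemma card_ge2_of_edge (H : sgraph) : (1 <= ne H)%N -> (2 <= #|H|)%N.
Proof.
move=> eH; have : (0 < #|arcs H|)%N by rewrite card_arcs muln_gt0.
case/card_gt0P => p; rewrite inE => /adj_neq p12.
by apply/card_gt1P; exists p.1, p.2.
Qed.

Definition hom (H G : sgraph) (f : {ffun H -> G}) : bool :=
  [forall u, forall v, adj u v ==> adj (f u) (f v)].

Definition ihom (H G : sgraph) : {set {ffun H -> G}} :=
  [set f : {ffun H -> G} | injectiveb f && hom f].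

Definition avoids (H G : sgraph) (c : G) : {set {ffun H -> G}} :=
  [set f : {ffun H -> G} | [forall x, f x != c]].

Definition hits (H G : sgraph) (S : {set G}) : {set {ffun H -> G}} :=
  [set f : {ffun H -> G} | [exists x, f x \in S]].

Lemma inj_del_vertex (H G : sgraph) (a : G) :
  inj H (del_vertex a) = #|ihom H G :&: avoids H a|.
Proof.
pose emb (f : {ffun H -> del_vertex a}) : {ffun H -> G} := [ffun x => val (f x)].
have emb_inj : injective emb.
  move=> f g E; apply/ffunP => x; apply: val_inj.
  by have := congr1 (fun h : {ffun H -> G} => h x) E; rewrite !ffunE.
rewrite /inj -(card_imset _ emb_inj); apply: eq_card => g.
rewrite !inE; apply/imsetP/idP.
  move=> [f]; rewrite inE => /andP [/injectiveP fi /forallP fh] ->.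
  apply/andP; split; [apply/andP; split|].
  - by apply/injectiveP => x y; rewrite !ffunE => E; apply: fi; apply: val_inj.
  - by apply/forallP => u; apply/forallP => v; rewrite !ffunE; apply: (forallP (fh u)).
  - by apply/forallP => x; rewrite ffunE; apply: (valP (f x)).
case/andP => /andP [/injectiveP gi /forallP gh] /forallP ga.
exists [ffun x => (Sub (g x) (ga x) : del_vertex a)]; last first.
  by apply/ffunP => x; rewrite !ffunE.
rewrite inE; apply/andP; split.
  by apply/injectiveP => x y; rewrite !ffunE => /(congr1 val); apply: gi.
by apply/forallP => u; apply/forallP => v; rewrite !ffunE; apply: (forallP (gh u)).
Qed.

Section RealFacts.
Variable R : realFieldType.
Local Open Scope ring_scope.

Lemma sum_le_mul_card (I : finType) (P : pred I) (Q : {set I}) (F : I -> R) K :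
  (forall i, P i -> i \in Q) -> (forall i, P i -> F i <= K) -> 0 <= K ->
  \sum_(i | P i) F i <= K * #|Q|%:R.
Proof.
move=> PQ FK K0; apply: le_trans (_ : \sum_(i | P i) K <= _); first exact: ler_sum.
rewrite mulr_natr -sumr_const big_mkcond [leRHS]big_mkcond /=.
by apply: ler_sum => i _; case: ifP => [/PQ ->|] //; case: ifP.
Qed.

Lemma bernoulli (x : R) (m : nat) : 0 <= x -> x <= 1 -> 1 - m%:R * x <= (1 - x) ^+ m.
Proof.
move=> x0 x1; elim: m => [|m IH]; first by rewrite mul0r subr0 expr0.
have := ler_wpM2l (_ : 0 <= 1 - x) IH; rewrite exprS -natr1.
have : 0 <= m%:R * (x * x) :> R by rewrite !mulr_ge0.
by move: ((1 - x) ^+ m) => y; nra.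
Qed.

Lemma loss_factor_le (delta K Kc : R) (h : nat) :
  (2 <= h)%N -> 0 <= delta -> 0 <= K -> Kc <= K ->
  (1 - (h - 2)%:R * (2 * delta)) * K <= Kc ->
  (1 - 3 * delta * h%:R ^+ 3) * K <= Kc * (1 - 2 * delta * h%:R ^+ 2) - delta * h%:R * K.
Proof.
move=> h2 d0 K0 KcK KcK'; set m := (h - 2)%N in KcK' *.
have hm : h%:R = m%:R + 2 :> R by rewrite -natrD subnK.
have m0 : 0 <= m%:R :> R by [].
have cubic : 0 <= 3 * h%:R ^+ 3 - 2 * h%:R ^+ 2 - h%:R - 2 * m%:R :> R.
  have -> : 3 * h%:R ^+ 3 - 2 * h%:R ^+ 2 - h%:R - 2 * m%:R
      = 3 * m%:R ^+ 3 + 16 * m%:R ^+ 2 + 25 * m%:R + 14 :> R by rewrite hm; ring.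
  by rewrite !addr_ge0 ?mulr_ge0 ?exprn_ge0.
rewrite -subr_ge0.
have -> : Kc * (1 - 2 * delta * h%:R ^+ 2) - delta * h%:R * K
          - (1 - 3 * delta * h%:R ^+ 3) * K
    = (Kc - (1 - m%:R * (2 * delta)) * K) + 2 * delta * h%:R ^+ 2 * (K - Kc)
      + delta * K * (3 * h%:R ^+ 3 - 2 * h%:R ^+ 2 - h%:R - 2 * m%:R) by ring.
apply: addr_ge0; first apply: addr_ge0.
- by rewrite subr_ge0.
- by rewrite !mulr_ge0 ?exprn_ge0 // subr_ge0.
- by rewrite !mulr_ge0.
Qed.

End RealFacts.

Section Twins.
Variables (G : sgraph) (A B : {set G}) (a b : G).
Hypotheses (disjAB : [disjoint A & B]) (indepA : indep A) (indepB : indep B)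
  (twinA : forall x y, x \in A -> y \notin A -> adj x y)
  (twinB : forall x y, x \in B -> y \notin B -> adj x y)
  (aA : a \in A) (bB : b \in B) (leBA : (#|B| <= #|A|)%N).

Lemma adjA x y : x \in A -> adj x y = (y \notin A).
Proof.
by move=> xA; case yA: (y \in A); [apply/negbTE/indepA | apply: twinA; rewrite ?yA].
Qed.

Lemma adjB x y : x \in B -> adj x y = (y \notin B).
Proof.
by move=> xB; case yB: (y \in B); [apply/negbTE/indepB | apply: twinB; rewrite ?yB].
Qed.

Lemma memA_notB x : x \in A -> x \notin B.
Proof. by move=> xA; apply/negP => xB; have := disjointFr disjAB xA; rewrite xB. Qed.

Lemma memB_notA x : x \in B -> x \notin A.
Proof. by move=> xB; apply/negP => /memA_notB; rewrite xB. Qed.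

Let Aseq := a :: enum (A :\ a).
Let Bseq := b :: enum (B :\ b).
Let Amatch := take (size Bseq) Aseq.

Lemma Aseq_cat : Aseq = Amatch ++ drop (size Bseq) Aseq.
Proof. by rewrite cat_take_drop. Qed.

Definition Aex : {set G} := [set x in drop (size Bseq) Aseq].

Lemma mem_Aseq x : (x \in Aseq) = (x \in A).
Proof. by rewrite in_cons mem_enum in_setD1; case: (eqVneq x a) => [->|]. Qed.

Lemma mem_Bseq x : (x \in Bseq) = (x \in B).
Proof. by rewrite in_cons mem_enum in_setD1; case: (eqVneq x b) => [->|]. Qed.

Lemma uniq_Aseq : uniq Aseq.
Proof. by rewrite /= enum_uniq mem_enum setD11. Qed.

Lemma uniq_Bseq : uniq Bseq.
Proof. by rewrite /= enum_uniq mem_enum setD11. Qed.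

Lemma size_Aseq : size Aseq = #|A|.
Proof. by rewrite /= -cardE (cardsD1 a A) aA. Qed.

Lemma size_Bseq : size Bseq = #|B|.
Proof. by rewrite /= -cardE (cardsD1 b B) bB. Qed.

Lemma size_Amatch : size Amatch = size Bseq.
Proof. by rewrite size_takel // size_Aseq size_Bseq. Qed.

Lemma index_Amatch x : x \in Amatch -> (index x Aseq < size Bseq)%N.
Proof. by move=> xT; rewrite Aseq_cat index_cat xT -size_Amatch index_mem. Qed.

Lemma nth_Amatch x0 i : (i < size Bseq)%N -> nth x0 Aseq i \in Amatch.
Proof. by move=> ik; rewrite -(nth_take _ ik) mem_nth // size_Amatch. Qed.

Lemma Amatch_A x : x \in Amatch -> x \in A.
Proof. by rewrite -mem_Aseq => /mem_take. Qed.

Lemma Aex_A x : x \in Aex -> x \in A.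
Proof. by rewrite /Aex inE -mem_Aseq => /mem_drop. Qed.

Lemma Amatch_notAex x : x \in Amatch -> x \notin Aex.
Proof.
move=> xT; have := uniq_Aseq; rewrite Aseq_cat cat_uniq => /and3P [_ /hasPn notT _].
by rewrite /Aex inE; apply/negP => /notT; rewrite xT.
Qed.

Lemma A_Amatch_or_Aex x : x \in A -> (x \in Amatch) || (x \in Aex).
Proof. by rewrite -mem_Aseq Aseq_cat mem_cat /Aex inE. Qed.

Lemma card_Aex : #|Aex| = (#|A| - #|B|)%N.
Proof.
rewrite cardsE (card_uniqP _) ?drop_uniq ?uniq_Aseq //.
by rewrite size_drop size_Aseq size_Bseq.
Qed.

(* [pi] swaps the i-th entries of [Bseq] and [Amatch], which start with [b] and [a]. *)
Definition pi (x : G) : G :=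
  if x \in Bseq then nth x Aseq (index x Bseq)
  else if x \in Amatch then nth x Bseq (index x Aseq) else x.

Lemma pi_B x : x \in B -> pi x \in Amatch.
Proof. by rewrite /pi -mem_Bseq => xB; rewrite xB nth_Amatch ?index_mem. Qed.

Lemma pi_Amatch x : x \in Amatch -> pi x \in B.
Proof.
move=> xT; rewrite /pi mem_Bseq (negbTE (memA_notB (Amatch_A xT))) xT.
by rewrite -mem_Bseq mem_nth // index_Amatch.
Qed.

Lemma pi_id x : x \notin B -> x \notin Amatch -> pi x = x.
Proof. by rewrite /pi mem_Bseq => /negbTE -> /negbTE ->. Qed.

Lemma piK : involutive pi.
Proof.
have le_BA : (size Bseq <= size Aseq)%N by rewrite size_Aseq size_Bseq.
move=> x; case xB: (x \in B).
  have yT := pi_B xB; have /negbTE yB := memA_notB (Amatch_A yT).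
  have E1 : pi (pi x) = nth (pi x) Bseq (index (pi x) Aseq).
    by rewrite {1}/pi mem_Bseq yB yT.
  have E2 : pi x = nth x Aseq (index x Bseq) by rewrite /pi mem_Bseq xB.
  rewrite E1 {2}E2 index_uniq; last exact: uniq_Aseq.
    by rewrite nth_index ?mem_Bseq.
  by rewrite (leq_trans _ le_BA) // index_mem mem_Bseq.
case xT: (x \in Amatch); last first.
  have E : pi x = x by rewrite /pi mem_Bseq xB xT.
  by rewrite !E.
have E1 : pi (pi x) = nth (pi x) Aseq (index (pi x) Bseq).
  by rewrite {1}/pi mem_Bseq pi_Amatch.
have E2 : pi x = nth x Bseq (index x Aseq) by rewrite /pi mem_Bseq xB xT.
rewrite E1 {2}E2 index_uniq ?uniq_Bseq ?index_Amatch //.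
by rewrite E2 nth_index // mem_Aseq Amatch_A.
Qed.

Lemma a_Amatch : a \in Amatch.
Proof. by rewrite /Amatch /= in_cons eqxx. Qed.

Lemma pi_a : pi a = b.
Proof. by rewrite /pi mem_Bseq (negbTE (memA_notB aA)) a_Amatch /= eqxx. Qed.

Lemma pi_b : pi b = a.
Proof. by rewrite -pi_a piK. Qed.

Lemma pi_Aex x : x \in Aex -> pi x = x.
Proof.
move=> xR; apply: pi_id; first exact/memA_notB/Aex_A.
by apply: contraL xR => /Amatch_notAex.
Qed.

Lemma a_notin_Aex : a \notin Aex.
Proof. exact: Amatch_notAex a_Amatch. Qed.

Lemma b_notin_Aex : b \notin Aex.
Proof. by apply: contraL bB => /Aex_A/memA_notB. Qed.

Lemma pi_memB y : y \notin Aex -> (pi y \in B) = (y \in A).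
Proof.
move=> yR; case yA: (y \in A).
  by case/orP: (A_Amatch_or_Aex yA) => [/pi_Amatch //|yR']; rewrite yR' in yR.
case yB: (y \in B); first exact/negbTE/memA_notB/Amatch_A/pi_B.
by rewrite pi_id ?yB //; apply: contraFN yA => /Amatch_A.
Qed.

Lemma pi_memA y : y \notin Aex -> (pi y \in A) = (y \in B).
Proof.
move=> yR; case yB: (y \in B); first exact/Amatch_A/pi_B.
case yA: (y \in A).
  by case/orP: (A_Amatch_or_Aex yA) => [/pi_Amatch/memB_notA/negbTE //|yR'];
    rewrite yR' in yR.
by rewrite pi_id ?yB //; apply: contraFN yA => /Amatch_A.
Qed.

Lemma pi_adj x y : x \notin Aex -> y \notin Aex -> adj (pi x) (pi y) = adj x y.
Proof.
have twin_side u v : u \notin Aex -> v \notin Aex -> (u \in A) || (u \in B) ->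
    adj (pi u) (pi v) = adj u v.
  move=> uR vR /orP [uA|uB].
    by rewrite (adjA v uA) (adjB _ _) ?pi_memB ?pi_memB.
  by rewrite (adjB v uB) (adjA _ _) ?pi_memA ?pi_memA.
move=> xR yR; case xAB: ((x \in A) || (x \in B)); first exact: twin_side.
case yAB: ((y \in A) || (y \in B)).
  by rewrite adj_sym [RHS]adj_sym; apply: twin_side.
move/negbT: xAB; rewrite negb_or => /andP [xA xB].
move/negbT: yAB; rewrite negb_or => /andP [yA yB].
have notT u : u \notin A -> u \notin Amatch by apply: contra => /Amatch_A.
by rewrite !pi_id ?notT.
Qed.

Variable H : sgraph.

Lemma ab_neq : a != b.
Proof. by apply: contraTneq bB => <-; apply: memA_notB. Qed.

Lemma card_ihom_avoid_notAex :
  #|ihom H G :&: avoids H a :\: hits H Aex| = #|ihom H G :&: avoids H b :\: hits H Aex|.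
Proof.
have pi_maps c1 c2 : pi c1 = c2 -> {in ihom H G :&: avoids H c1 :\: hits H Aex,
    forall f, postcomp pi f \in ihom H G :&: avoids H c2 :\: hits H Aex}.
  move=> pic f; rewrite !inE negb_exists => /andP [/forallP fR /andP [/andP [fi fh] fc]].
  rewrite injectiveb_postcomp ?fi /=; last exact: piK.
  apply/and3P; split.
  - rewrite negb_exists; apply/forallP => x; rewrite ffunE.
    by apply: contra (fR x) => pfx; rewrite -[f x]piK pi_Aex.
  - apply/forallP => u; apply/forallP => v; rewrite !ffunE pi_adj ?fR //.
    exact: (forallP (forallP fh u) v).
  - apply/forallP => x; rewrite ffunE -pic; apply: contra (forallP fc x) => /eqP.
    by move/(congr1 pi); rewrite !piK => ->.
apply: (eq_card_involution (postcompK piK)); apply: pi_maps; [exact: pi_a | exact: pi_b].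
Qed.

Definition XA := ihom H G :&: avoids H a :&: hits H Aex :\: avoids H b.
Definition XB := ihom H G :&: avoids H b :&: hits H Aex :\: avoids H a.
Definition Y := [set g | postcomp (tperm a b) g \in XB].

Lemma card_ihom_avoid_diff :
  (#|ihom H G :&: avoids H a| + #|Y :\: XA| =
   #|ihom H G :&: avoids H b| + #|XA :\: Y|)%N.
Proof.
have common : ihom H G :&: avoids H a :&: hits H Aex :&: avoids H b =
              ihom H G :&: avoids H b :&: hits H Aex :&: avoids H a.
  apply/setP => f; rewrite !inE.
  by case: [forall x, f x != a]; case: [forall x, f x != b]; rewrite ?andbT ?andbF.
have card_Y : #|Y| = #|XB|.
  apply: (eq_card_involution (postcompK (tpermK a b))) => f; rewrite /Y in_set //.
  by rewrite postcompK //; apply: tpermK.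
have eA := cardsID (hits H Aex) (ihom H G :&: avoids H a).
have eB := cardsID (hits H Aex) (ihom H G :&: avoids H b).
have eA' := cardsID (avoids H b) (ihom H G :&: avoids H a :&: hits H Aex).
have eB' := cardsID (avoids H a) (ihom H G :&: avoids H b :&: hits H Aex).
have eXY := cardsID Y XA; have eYX := cardsID XA Y.
rewrite setIC in eYX.
rewrite -eA -eB card_ihom_avoid_notAex -eA' -eB' common -/XA -/XB -card_Y -eXY -eYX.
ring.
Qed.

Definition C : {set G} := ~: (A :|: B).

Lemma C_notA x : x \in C -> x \notin A.
Proof. by rewrite !inE negb_or => /andP []. Qed.

Lemma C_notB x : x \in C -> x \notin B.
Proof. by rewrite !inE negb_or => /andP []. Qed.

Lemma Aex_notC x : x \in Aex -> x \notin C.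
Proof. by move/Aex_A => xA; rewrite !inE xA. Qed.

Definition frame (u z : H) : H -> {set G} := upd (upd (fun=> C) u [set b]) z Aex.

Definition framed (u z : H) : {set {ffun H -> G}} := fam (frame u z).

Lemma framedP u z (f : {ffun H -> G}) : u != z -> f \in framed u z ->
  [/\ f u = b, f z \in Aex & forall i, i != u -> i != z -> f i \in C].
Proof.
move=> uz /famP fF; split.
- by have := fF u; rewrite /frame upd_off // upd_at inE => /eqP.
- by have := fF z; rewrite /frame upd_at.
- by move=> i iu iz; have := fF i; rewrite /frame !upd_off.
Qed.

Lemma framed_adj u z (f : {ffun H -> G}) x y : u != z -> f \in framed u z -> x != y ->
  (x == u) || (x == z) -> adj (f x) (f y).
Proof.
move=> uz fF xy; have [fu fz fC] := framedP uz fF.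
case/orP => /eqP x_uz; subst x.
  rewrite fu adjB //; case: (eqVneq y z) => [->|yz]; first exact/memA_notB/Aex_A.
  by apply: C_notB; apply: fC => //; rewrite eq_sym.
rewrite (adjA _ (Aex_A fz)); case: (eqVneq y u) => [->|yu]; first by rewrite fu memB_notA.
by apply: C_notA; apply: fC => //; rewrite eq_sym.
Qed.

Definition framed_ihom (u z : H) : {set {ffun H -> G}} := framed u z :&: ihom H G.

(* Transposing [a] and [b] sends the edge [uz] onto [(a, f z)], inside [A]. *)
Lemma framed_ihom_sub u z (f : {ffun H -> G}) :
  adj u z -> f \in framed_ihom u z -> f \in XA :\: Y.
Proof.
move=> uz /setIP [fF]; rewrite inE => /andP [fi fh].
have [fu fz fC] := framedP (adj_neq uz) fF.
have fa x : f x != a.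
  case: (eqVneq x u) => [->|xu]; first by rewrite fu eq_sym ab_neq.
  case: (eqVneq x z) => [->|xz]; first by apply: contraTneq fz => ->; apply: a_notin_Aex.
  by apply: contraTneq (fC _ xu xz) => ->; rewrite !inE aA.
rewrite !inE fi fh /=; apply/and4P; split.
- apply/negP => /and3P [_ /andP [/andP [_ th] _] _].
  have /implyP/(_ uz) := forallP (forallP th u) z.
  rewrite !ffunE fu tpermR tpermD ?(adjA _ aA) ?(Aex_A fz) //.
  + by apply: contraTneq fz => <-; apply: a_notin_Aex.
  + by apply: contraTneq fz => <-; apply: b_notin_Aex.
- by rewrite negb_forall; apply/existsP; exists u; rewrite fu eqxx.
- by apply/forallP.
- by apply/existsP; exists z.
Qed.

Lemma framed_ihom_arc_uniq u z u' z' (f : {ffun H -> G}) : adj u z -> adj u' z' ->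
  f \in framed_ihom u z -> f \in framed_ihom u' z' -> (u, z) = (u', z').
Proof.
move=> uz uz' /setIP [fF _] /setIP [fF' _].
have [fu fz _] := framedP (adj_neq uz) fF.
have [fu' fz' fC'] := framedP (adj_neq uz') fF'.
have eu : u = u'.
  apply/eqP; apply: contraT => nu; case: (eqVneq u z') => [E|nz].
    by move: fz'; rewrite -E fu => /Aex_A/memA_notB; rewrite bB.
  by move: (fC' _ nu nz); rewrite fu !inE bB orbT.
subst u'; congr pair; apply/eqP; apply: contraT => nz.
have nu : z != u by rewrite eq_sym adj_neq.
by have := fC' _ nu nz; rewrite (negbTE (Aex_notC fz)).
Qed.

Definition off_arc (u z : H) (w : H * H) :=
  [&& w.1 != w.2, w.1 != u, w.1 != z, w.2 != u & w.2 != z].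

Definition framed_miss (u z : H) (w : H * H) : {set {ffun H -> G}} :=
  [set f in framed u z | ~~ adj (f w.1) (f w.2)].

Lemma framed_not_ihom u z (f : {ffun H -> G}) : u != z -> f \in framed u z ->
  f \notin framed_ihom u z -> exists2 w, off_arc u z w & f \in framed_miss u z w.
Proof.
move=> uz fF fI.
have [x [y [xy nadj]]] : exists x y, x != y /\ ~~ adj (f x) (f y).
  move: fI; rewrite in_setI fF /= inE negb_and => /orP [/injectivePn [x [y xy E]] | nh].
    by exists x, y; rewrite E adj_irr.
  move: nh; rewrite negb_forall => /existsP [x]; rewrite negb_forall => /existsP [y].
  by rewrite negb_imply => /andP [xy nadj]; exists x, y; rewrite adj_neq.
exists (x, y); last by rewrite inE fF.
rewrite /off_arc /= xy /=.
case xuz: ((x == u) || (x == z)); first by rewrite (framed_adj uz fF xy xuz) in nadj.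
case yuz: ((y == u) || (y == z)).
  by rewrite adj_sym (framed_adj uz fF _ yuz) // eq_sym in nadj.
by move: xuz yuz; case: (x == u); case: (x == z); case: (y == u); case: (y == z).
Qed.

Definition defect (q : (H * H) * H) : {set {ffun H -> G}} :=
  fam (upd (upd (upd (fun=> setT) q.1.1 [set b]) q.1.2 (B :\ b)) q.2 Aex).

(* Since [g] respects adjacency after transposing [a] and [b], an edge of [H]
   losing adjacency under [g] must be sent to [b] and a vertex of [B :\ b]. *)
Lemma Y_XA_defect (g : {ffun H -> G}) : g \in Y :\: XA ->
  exists2 q : (H * H) * H, [&& adj q.1.1 q.1.2, q.2 != q.1.1 & q.2 != q.1.2] &
    g \in defect q.
Proof.
rewrite !inE => /andP [nXA].
rewrite injectiveb_postcomp; last exact: tpermK.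
move=> /and3P [gb' /andP [/andP [gi th] ga'] gR'].
have ga x : g x != a.
  by apply: contra (forallP ga' x); rewrite ffunE => /eqP ->; rewrite tpermL.
have [u gu] : exists u, g u = b.
  move: gb'; rewrite negb_forall => /existsP [u]; rewrite negbK ffunE => /eqP E.
  by exists u; rewrite -[g u](tpermK a b) E tpermL.
have [y gy] : exists y, g y \in Aex.
  move: gR' => /existsP [y]; rewrite ffunE => yR; exists y; move: yR.
  case: (tpermP a b (g y)) => [->|->|_ _ //].
    by rewrite (negbTE b_notin_Aex).
  by rewrite (negbTE a_notin_Aex).
have [x [v [xv nadj]]] : exists x v, adj x v /\ ~~ adj (g x) (g v).
  have : ~~ hom g.
    apply: contra nXA => gh; rewrite gi gh /=; apply/and3P; split.
    - by rewrite negb_forall; apply/existsP; exists u; rewrite gu eqxx.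
    - exact/forallP.
    - by apply/existsP; exists y.
  rewrite negb_forall => /existsP [x]; rewrite negb_forall => /existsP [v].
  by rewrite negb_imply => /andP [xv nadj]; exists x, v.
have tadj : adj (tperm a b (g x)) (tperm a b (g v)).
  by move: th => /forallP /(_ x) /forallP /(_ v); rewrite xv !ffunE.
have ginj : injective g by apply/injectiveP.
have b_partner p p' : adj p p' -> ~~ adj (g p) (g p') -> g p = b -> g p' \in B :\ b.
  move=> pp' npp' gp.
  have gp'b : g p' != b by rewrite -gp (inj_eq ginj) eq_sym adj_neq.
  by rewrite !inE gp'b /=; move: npp'; rewrite gp adjB // negbK.
have y_off p : g p \in B -> y != p.
  by move=> gp; apply: contraTneq gy => ->; apply/negP => /Aex_A/memA_notB; rewrite gp.
have defectP p p' : g p = b -> g p' \in B :\ b -> g \in defect ((p, p'), y).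
  move=> gp gp'; apply/famP => i; rewrite /upd /=.
  by case: eqP => [->|_] //; case: eqP => [->|_] //; case: eqP => [->|_];
    rewrite ?inE ?gp.
case: (eqVneq (g x) b) => [gx|gxb].
  have gvB := b_partner _ _ xv nadj gx.
  exists ((x, v), y); last exact: defectP.
  by rewrite /= xv (y_off x) ?gx // y_off //; case/setD1P: gvB.
case: (eqVneq (g v) b) => [gv|gvb].
  have gxB : g x \in B :\ b by apply: b_partner gv; rewrite adj_sym.
  exists ((v, x), y); last exact: defectP.
  by rewrite /= adj_sym xv (y_off v) ?gv // y_off //; case/setD1P: gxB.
have tperm_g w : g w != b -> tperm a b (g w) = g w.
  by move=> gwb; apply: tpermD; rewrite eq_sym ?ga.
by move: nadj; rewrite -(tperm_g x gxb) -(tperm_g v gvb) tadj.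
Qed.

Lemma card_framed u z : u != z ->
  (#|framed u z| * #|C| * #|C| = #|Aex| * #|C| ^ #|H|)%N.
Proof.
move=> uz; have := card_fam_upd (upd (fun=> C) u [set b]) z Aex.
rewrite upd_off 1?eq_sym // => ->.
by rewrite -mulnA card_fam_upd cards1 mul1n card_fam prod_nat_const.
Qed.

Definition pinned (u z : H) (w : H * H) (q : G * G) : {set {ffun H -> G}} :=
  fam (upd (upd (frame u z) w.1 [set q.1]) w.2 [set q.2]).

Lemma card_pinned u z w q : off_arc u z w ->
  (#|pinned u z w q| * #|C| * #|C| = #|framed u z|)%N.
Proof.
case/and5P => w12 w1u w1z w2u w2z.
have frameC i : i != u -> i != z -> frame u z i = C.
  by move=> iu iz; rewrite /frame !upd_off.
have := card_fam_upd (upd (frame u z) w.1 [set q.1]) w.2 [set q.2].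
rewrite upd_off 1?eq_sym // frameC // => ->.
by rewrite cards1 mul1n -(frameC w.1) // card_fam_upd cards1 mul1n.
Qed.

Lemma card_defect (q : (H * H) * H) : q.1.1 != q.1.2 -> q.2 != q.1.1 -> q.2 != q.1.2 ->
  (#|defect q| * #|G| * #|G| * #|G| = #|B :\ b| * #|Aex| * #|G| ^ #|H|)%N.
Proof.
move=> uz yu yz.
have e3 := card_fam_upd (upd (upd (fun=> setT) q.1.1 [set b]) q.1.2 (B :\ b)) q.2 Aex.
have e2 := card_fam_upd (upd (fun=> setT) q.1.1 [set b]) q.1.2 (B :\ b).
have e1 := card_fam_upd (fun=> setT) q.1.1 [set b].
rewrite !upd_off // cardsT in e3; rewrite upd_off 1?eq_sym // cardsT in e2.
rewrite cardsT in e1.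
rewrite /defect e3 -(mulnA #|Aex|) e2 -(mulnA #|Aex|) -(mulnA #|B :\ b|) e1.
by rewrite cards1 mul1n card_fam prod_nat_const cardsT; ring.
Qed.

Definition nonadjC : {set G * G} :=
  [set q : G * G | [&& q.1 \in C, q.2 \in C & ~~ adj q.1 q.2]].

Lemma card_nonadjC_le : (#|nonadjC| <= \sum_(x in C) #|[set y | ~~ adj x y]|)%N.
Proof.
rewrite (eq_bigr (fun x => #|pair x @: [set y | ~~ adj x y]|)); last first.
  by move=> x _; rewrite card_imset //; move=> y1 y2 [].
apply: card_le_sum_cover => -[x y]; rewrite inE => /and3P [xC yC nxy].
by exists x => //; apply/imsetP; exists y; rewrite ?inE.
Qed.

Lemma card_framed_miss_le u z w : u != z -> off_arc u z w ->
  (#|framed_miss u z w| * #|C| * #|C| <= #|nonadjC| * #|framed u z|)%N.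
Proof.
move=> uz offw.
have cover : (#|framed_miss u z w| <= \sum_(q in nonadjC) #|pinned u z w q|)%N.
  apply: card_le_sum_cover => f; rewrite inE => /andP [fF nadj].
  have /and5P [w12 w1u w1z w2u w2z] := offw.
  have [_ _ fC] := framedP uz fF.
  exists (f w.1, f w.2); first by rewrite inE /= !fC.
  apply/famP => i; rewrite /upd /=.
  case: eqP => [->|_]; first by rewrite inE.
  case: eqP => [->|_]; first by rewrite inE.
  by move/famP: fF.
rewrite -mulnA (leq_trans (leq_mul cover (leqnn _))) //.
rewrite big_distrl /= (eq_bigr (fun=> #|framed u z|)) ?sum_nat_const //.
by move=> q _; rewrite mulnA card_pinned.
Qed.

Lemma card_framed_le u z : u != z ->
  (#|framed u z| <= #|framed_ihom u z| + \sum_(w | off_arc u z w) #|framed_miss u z w|)%N.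
Proof.
move=> uz; rewrite -(cardsID (framed_ihom u z) (framed u z)) leq_add //.
  by rewrite setIC subset_leq_card // subsetIl.
by apply: card_le_sum_cover => f; rewrite inE => /andP [fI fF]; apply: framed_not_ihom.
Qed.

Lemma sum_card_framed_ihom_le :
  (\sum_(p in arcs H) #|framed_ihom p.1 p.2| <= #|XA :\: Y|)%N.
Proof.
apply: sum_card_le_disjoint => [[u z] f|[u z] [u' z'] f].
  by rewrite [_ \in arcs H]inE; apply: framed_ihom_sub.
by rewrite ![_ \in arcs H]inE; apply: framed_ihom_arc_uniq.
Qed.

Lemma card_Y_XA_le : (#|Y :\: XA| <=
   \sum_(q | [&& adj q.1.1 q.1.2, q.2 != q.1.1 & q.2 != q.1.2]) #|defect q|)%N.
Proof. exact: card_le_sum_cover Y_XA_defect. Qed.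

Section Estimates.
Local Open Scope ring_scope.
Variables (R : realFieldType) (delta : R).
Hypotheses (delta_gt0 : 0 < delta) (delta_le : delta <= 1 / 4) (denseG : dense delta G).

Let n : R := #|G|%:R.
Let c : R := #|C|%:R.
Let t : R := #|Aex|%:R.
Let m := (#|H| - 2)%N.

Lemma nonadj_le (x : G) : #|[set y | ~~ adj x y]|%:R <= delta * n.
Proof.
have := denseG x; rewrite /deg /nv -/n.
have := cardsC [set y | adj x y].
have -> : ~: [set y | adj x y] = [set y | ~~ adj x y] by apply/setP => y; rewrite !inE.
move/(congr1 (fun k : nat => k%:R : R)); rewrite natrD -/n; lra.
Qed.

Lemma cardA_le : #|A|%:R <= delta * n.
Proof.
have -> : A = [set y | ~~ adj a y] by apply/setP => y; rewrite inE adjA // negbK.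
exact: nonadj_le.
Qed.

Lemma cardB_le : #|B|%:R <= delta * n.
Proof.
have -> : B = [set y | ~~ adj b y] by apply/setP => y; rewrite inE adjB // negbK.
exact: nonadj_le.
Qed.

Lemma cardC_eq : c = n - #|A|%:R - #|B|%:R.
Proof.
have := cardsC (A :|: B); rewrite cardsU (disjoint_setI0 disjAB) cards0 subn0.
by move/(congr1 (fun k : nat => k%:R : R)); rewrite !natrD /c /C -/n; lra.
Qed.

Lemma n_gt0 : 0 < n.
Proof. by rewrite ltr0n; apply/card_gt0P; exists a. Qed.

Lemma cardC_ge : (1 - 2 * delta) * n <= c.
Proof. by rewrite cardC_eq; have := cardA_le; have := cardB_le; lra. Qed.

Lemma cardC_le : c <= n.
Proof.
by rewrite cardC_eq; have : 0 <= #|A|%:R :> R by []; have : 0 <= #|B|%:R :> R by []; lra.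
Qed.

Lemma cardC_gt0 : 0 < c.
Proof.
have : 0 < (1 - 2 * delta) * n by apply: mulr_gt0; [have := delta_le; lra | exact: n_gt0].
by have := cardC_ge; lra.
Qed.

Lemma cardC_pow_ge : (1 - m%:R * (2 * delta)) * n ^+ m <= c ^+ m.
Proof.
have n0 := ltW n_gt0; have := delta_le; have := delta_gt0 => d0 d4.
apply: le_trans (_ : ((1 - 2 * delta) * n) ^+ m <= _).
  by rewrite exprMn ler_wpM2r ?exprn_ge0 //; apply: bernoulli; lra.
apply: lerXn2r; rewrite ?nnegrE ?cardC_ge //.
by rewrite mulr_ge0 //; lra.
Qed.

Lemma cardC_pow_le : c ^+ m <= n ^+ m.
Proof. by apply: lerXn2r; rewrite ?nnegrE ?cardC_le. Qed.

Lemma card_framed_eq u z : u != z -> #|framed u z|%:R = t * c ^+ m.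
Proof.
move=> uz; have /subnK HE : (2 <= #|H|)%N by apply/card_gt1P; exists u, z.
have cC : c * c != 0 by rewrite mulf_neq0 // gt_eqF ?cardC_gt0.
move/(congr1 (fun k : nat => k%:R : R)): (card_framed uz).
rewrite -HE -/m !natrM natrX exprD expr2 -/c -/t => E.
by apply: (mulIf cC); rewrite mulrA E mulrA.
Qed.

Lemma card_nonadjC_real : #|nonadjC|%:R <= c * (delta * n).
Proof.
apply: le_trans (_ : (\sum_(x in C) #|[set y | ~~ adj x y]|)%N%:R <= _).
  by rewrite ler_nat card_nonadjC_le.
rewrite natr_sum mulrC; apply: sum_le_mul_card => // [x _|]; first exact: nonadj_le.
by rewrite mulr_ge0 ?ltW ?n_gt0.
Qed.

Lemma card_framed_miss_real u z w : u != z -> off_arc u z w ->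
  #|framed_miss u z w|%:R <= 2 * delta * #|framed u z|%:R.
Proof.
move=> uz offw; have := card_framed_miss_le uz offw; rewrite -(ler_nat R) !natrM -/c => le1.
have n2c : n <= 2 * c by have := cardC_ge; have := n_gt0; have := delta_le; nra.
have le2 : #|nonadjC|%:R <= c * (delta * (2 * c)).
  apply: (le_trans card_nonadjC_real); apply: ler_wpM2l; first exact: ltW cardC_gt0.
  by apply: ler_wpM2l; first exact: ltW.
rewrite -(ler_pM2r (mulr_gt0 cardC_gt0 cardC_gt0)) mulrA (le_trans le1) //.
have -> : 2 * delta * #|framed u z|%:R * (c * c)
    = c * (delta * (2 * c)) * #|framed u z|%:R by ring.
exact: ler_wpM2r le2.
Qed.

Lemma card_framed_ihom_ge p : p \in arcs H ->
  t * c ^+ m * (1 - 2 * delta * #|H|%:R ^+ 2) <= #|framed_ihom p.1 p.2|%:R.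
Proof.
rewrite inE => /adj_neq p12.
have := card_framed_le p12; rewrite -(ler_nat R) natrD natr_sum card_framed_eq //.
have miss : \sum_(w | off_arc p.1 p.2 w) #|framed_miss p.1 p.2 w|%:R
           <= 2 * delta * (t * c ^+ m) * #|[set: H * H]|%:R.
  apply: sum_le_mul_card => // [w offw|].
    by rewrite -(card_framed_eq p12); apply: card_framed_miss_real.
  by rewrite !mulr_ge0 // ?exprn_ge0 // ltW.
move: miss; rewrite cardsT card_prod natrM -expr2; nra.
Qed.

Lemma card_defect_le (q : (H * H) * H) :
  [&& adj q.1.1 q.1.2, q.2 != q.1.1 & q.2 != q.1.2] ->
  #|defect q|%:R <= delta * t * n ^+ m.
Proof.
case/and3P => /adj_neq uz yu yz.
have /subnK HE : (2 <= #|H|)%N by apply/card_gt1P; exists q.1.1, q.1.2.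
have := card_defect uz yu yz; rewrite -HE -/m.
move/(congr1 (fun k : nat => k%:R : R)); rewrite !natrM natrX -/n -/t exprD expr2.
move=> E.
have n0 := ltW n_gt0.
have Bn : #|B :\ b|%:R <= delta * n.
  by apply: le_trans cardB_le; rewrite (cardsD1 b B) bB ler_nat leq_addl.
rewrite -(ler_pM2r n_gt0) -(ler_pM2r n_gt0) -(ler_pM2r n_gt0) E.
have -> : #|B :\ b|%:R * t * (n ^+ m * (n * n)) = #|B :\ b|%:R * (t * n ^+ m * (n * n)).
  by ring.
have -> : delta * t * n ^+ m * n * n * n = delta * n * (t * n ^+ m * (n * n)) by ring.
by rewrite ler_wpM2r // !mulr_ge0 // exprn_ge0.
Qed.

Lemma card_XA_Y_ge :
  #|arcs H|%:R * (t * c ^+ m * (1 - 2 * delta * #|H|%:R ^+ 2)) <= #|XA :\: Y|%:R.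
Proof.
rewrite mulr_natl -sumr_const.
apply: le_trans (_ : \sum_(p in arcs H) #|framed_ihom p.1 p.2|%:R <= _).
  by apply: ler_sum => p; apply: card_framed_ihom_ge.
by rewrite -natr_sum ler_nat sum_card_framed_ihom_le.
Qed.

Lemma card_Y_XA_real :
  #|Y :\: XA|%:R <= delta * t * n ^+ m * (#|arcs H|%:R * #|H|%:R).
Proof.
apply: le_trans (_ : (\sum_(q | [&& adj q.1.1 q.1.2, q.2 != q.1.1 & q.2 != q.1.2])
                       #|defect q|)%N%:R <= _); first by rewrite ler_nat card_Y_XA_le.
rewrite natr_sum -natrM -cardsT -cardsX.
apply: sum_le_mul_card => [q /and3P [qa _ _]|q|]; first by rewrite !inE qa.
  exact: card_defect_le.
by rewrite !mulr_ge0 // ?exprn_ge0 ?ltW ?n_gt0 // ltW.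
Qed.

Lemma inj_del_twin_ge : (1 <= ne H)%N ->
  (inj H (del_vertex b))%:R + 2 * (ne H)%:R * (#|A|%:R - #|B|%:R)
    * (1 - 3 * delta * (nv H)%:R ^+ 3) * (nv G)%:R ^+ (nv H - 2)
  <= (inj H (del_vertex a))%:R.
Proof.
move=> eH; rewrite !inj_del_vertex /nv -/n -/m.
have /(congr1 (fun k : nat => k%:R : R)) := card_ihom_avoid_diff; rewrite !natrD => diff.
have -> : #|A|%:R - #|B|%:R = t by rewrite /t card_Aex natrB.
have -> : 2 * (ne H)%:R = #|arcs H|%:R :> R by rewrite card_arcs natrM.
have loss := loss_factor_le (card_ge2_of_edge eH) (ltW delta_gt0)
  (exprn_ge0 m (ltW n_gt0)) cardC_pow_le cardC_pow_ge.
have := ler_wpM2l (mulr_ge0 (ler0n R #|arcs H|) (ler0n R #|Aex|)) loss.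
have := card_XA_Y_ge; have := card_Y_XA_real; rewrite -/t; lra.
Qed.

End Estimates.
End Twins.

Local Open Scope ring_scope.

Theorem lemma2p3 (R : realFieldType) (H G : sgraph) (delta : R)
  (A B : {set G}) (a b : G) :
  (1 <= ne H)%N ->
  0 < delta -> delta <= 1 / 4 ->
  dense delta G ->
  [disjoint A & B] -> indep A -> indep B ->
  (#|B| <= #|A|)%N -> (1 <= #|B|)%N ->
  (forall x y, x \in A -> y \notin A -> adj x y) ->
  (forall x y, x \in B -> y \notin B -> adj x y) ->
  a \in A -> b \in B ->
  (inj H (del_vertex a))%:R >=
    (inj H (del_vertex b))%:R
    + 2 * (ne H)%:R * ((#|A|)%:R - (#|B|)%:R)
        * (1 - 3 * delta * (nv H)%:R ^+ 3) * (nv G)%:R ^+ (nv H - 2).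
Proof.
move=> eH delta_gt0 delta_le denseG disjAB indepA indepB leBA _ twinA twinB aA bB.
exact: inj_del_twin_ge.
Qed.
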